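(* There is an absolute constant $c$ such that for every integer $n\ge 2$ there exists an integer $d$ with $1\le d\le n-1$ and $\gcd(n,d)=1$ such that $s(n,d)\le c\,\frac{n}{\phi(n)}\log n\,\log\log n$.
   Context: $\phi$ is Euler's totient function; logarithms are natural. For positive integers $n,d$, the Euclidean algorithm sets $a_0=n$, $a_1=d$, and for $k\ge1$, as long as $a_k\neq 0$, defines $a_{k+1}$ as the remainder of $a_{k-1}$ upon division by $a_k$ and $q_k$ as the positive integer with $a_{k-1}=q_ka_k+a_{k+1}$; it stops at the first $\ell$ with $a_\ell=0$. The quotient sequence is $\mathbf{q}(n,d)=(q_1,\dots,q_{\ell-1})$, and $s(n,d)=q_1+\dots+q_{\ell-1}$ is the sum of the quotients. *)

From mathcomp Require Import all_boot.

(* Sum of partial quotients of the Euclidean algorithm on (a, b):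
   s(a,0) = 0, s(a,b) = a %/ b + s(b, a %% b) for b > 0.
   Implemented with fuel; fuel >= b suffices since the second argument
   strictly decreases. *)
Fixpoint quot_sum_fuel (fuel a b : nat) : nat :=
  match fuel with
  | 0 => 0
  | fuel'.+1 => if b == 0 then 0 else a %/ b + quot_sum_fuel fuel' b (a %% b)
  end.

Definition s (n d : nat) : nat := quot_sum_fuel d.+1 n d.

Example s_test1 : s 7 3 = 5. Proof. reflexivity. Qed.
Example s_test2 : s 13 5 = 6. Proof. reflexivity. Qed.

From Stdlib Require Import ZArith Lia Reals Lra.
From mathcomp Require Import all_boot zify.

(* For j >= 1 let N(j) be the total number of partial quotients >= j of n/d,
   over all d < n coprime to n.  The heart of the proof is the estimate
   N(j) <= 40 (n / j) log n.  Fix U with n <= U^2 j.  A partial quotient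
   q = x / y >= j met in the Euclidean algorithm at a stage where
   n = u x + v y is encoded by a key: (u, v, y) if u <= U, and
   (y, x mod y, u) otherwise (then y <= U).  A key determines d, because the
   coefficients expressing d in the current remainders complete (u, v) to a
   unimodular matrix; and for fixed first entries (a, b) there are at most
   n / (j a^2) + 1 admissible third entries.  Summing over a <= U gives
   N(j) = O((n / j) log n).

   Then, with m = log2 n + 1 and Q = 80 m^2, and since phi(n) >= n / m, at
   most phi(n) / 2 residues have a quotient >= Q.  For every other residue
   s(n, d) = sum_{j < Q} #{quotients > j}, so the sum of their s(n, d) is at
   most N(1) + ... + N(Q) = O(n log n log Q), and the smallest s(n, d) among
   them is below the average. *)

Set Implicit Arguments. Unset Strict Implicit.

Fixpoint quotients (fuel x y : nat) : seq nat :=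
  if fuel is fuel'.+1 then
    if y == 0 then [::] else x %/ y :: quotients fuel' y (x %% y)
  else [::].

Lemma quot_sum_fuelE fuel x y : quot_sum_fuel fuel x y = sumn (quotients fuel x y).
Proof. by elim: fuel x y => [|fuel IH] x y //=; case: (y == 0) => //=; rewrite IH. Qed.

Definition pquots (n d : nat) : seq nat := quotients d.+1 n d.

Lemma s_sumn n d : s n d = sumn (pquots n d).
Proof. exact: quot_sum_fuelE. Qed.

Lemma quotients_le fuel x y q : q \in quotients fuel x y -> q <= maxn x y.
Proof.
elim: fuel x y => [|fuel IH] x y //=; case: eqP => // /eqP y0.
have ltr : x %% y < y by rewrite ltn_mod lt0n.
rewrite inE => /orP [/eqP ->|/IH]; first exact: leq_trans (leq_div _ _) (leq_maxl _ _).
by move/leq_trans; apply; rewrite (maxn_idPl (ltnW ltr)) leq_maxr.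
Qed.

(* If (a1, b1) and (a2, b2) both complete (p1, p2) to a matrix of the same
   determinant e = +-1, then a1 x1 + b1 x2 and a2 x1 + b2 x2 differ by a
   multiple of n = p1 x1 + p2 x2; hence they coincide when both lie in [0, n). *)
Lemma unimodular_fiber (n p1 p2 x1 x2 a1 b1 a2 b2 e : Z) :
  (e * e = 1)%Z -> n = (p1 * x1 + p2 * x2)%Z ->
  (p1 * b1 - p2 * a1 = e)%Z -> (p1 * b2 - p2 * a2 = e)%Z ->
  (0 <= a1 * x1 + b1 * x2 < n)%Z -> (0 <= a2 * x1 + b2 * x2 < n)%Z ->
  (a1 * x1 + b1 * x2 = a2 * x1 + b2 * x2)%Z.
Proof.
move=> e2 En E1 E2 B1 B2.
set d1 := (a1 * x1 + b1 * x2)%Z in B1 *; set d2 := (a2 * x1 + b2 * x2)%Z in B2 *.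
have cross : (p1 * (b1 - b2) = p2 * (a1 - a2))%Z by lia.
set t := (e * (b1 * (a1 - a2) - a1 * (b1 - b2)))%Z.
have diff : (d1 - d2 = t * n)%Z.
  have -> : (t * n = e * ((p1 * b1 - p2 * a1) * (d1 - d2))
                      - e * d1 * (p1 * (b1 - b2) - p2 * (a1 - a2)))%Z.
    by rewrite /t /d1 /d2 En; ring.
  by rewrite E1 cross Z.sub_diag Z.mul_0_r Z.sub_0_r Z.mul_assoc e2 Z.mul_1_l.
have t0 : t = 0%Z by nia.
by rewrite t0 Z.mul_0_l in diff; lia.
Qed.

(* The natural-number form of "p1 b - p2 a = +1 (sg) or -1 (~~ sg)". *)
Definition det (sg : bool) (p1 p2 a b : nat) : Prop :=
  if sg then p1 * b = p2 * a + 1 else p2 * a = p1 * b + 1.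

Lemma det_coprime sg p1 p2 a b : det sg p1 p2 a b -> coprime p1 p2.
Proof.
rewrite /coprime -dvdn1 => D.
have g1 : gcdn p1 p2 %| p1 * b by apply/dvdn_mulr/dvdn_gcdl.
have g2 : gcdn p1 p2 %| p2 * a by apply/dvdn_mulr/dvdn_gcdr.
by case: sg D => D; [rewrite -(dvdn_addr _ g2) -D | rewrite -(dvdn_addr _ g1) -D].
Qed.

(* A key (cs, sg, a, b, e) encodes one large partial quotient: cs records
   which of the two encodings was used, sg the sign of the determinant. *)
Definition key := (bool * bool * nat * nat * nat)%type.

(* The d-independent constraints on a key, used to count keys: e is a
   coordinate of n = a c + b e with the partner coordinate c >= j e. *)
Definition admissible (n j a b e : nat) : bool :=
  [&& 0 < a, b <= a, coprime a b, 0 < e &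
      [exists c : 'I_n.+1, (a * c + b * e == n) && (j * e <= c)]].

(* The key fixes three of the four numbers in n = p1 x1 + p2 x2 together
   with the sign of a unimodular completion (a', b') expressing d. *)
Definition key_locates (n d : nat) (k : key) : Prop :=
  let: (cs, sg, a, b, e) := k in
  exists p1 p2 x1 x2 a' b', [/\ n = p1 * x1 + p2 * x2, d = a' * x1 + b' * x2,
    det sg p1 p2 a' b', 0 < p1 /\ 0 < x1 &
    if cs then (a, b, e) = (p1, p2, x2) else (a, b, e) = (x1, x2, p2)].

Definition valid_key (n d j U : nat) (k : key) : Prop :=
  let: (_, _, a, b, e) := k in
  [/\ a <= U, e <= n, admissible n j a b e & key_locates n d k].

Lemma key_fiber n d1 d2 k :
  key_locates n d1 k -> key_locates n d2 k -> d1 < n -> d2 < n -> d1 = d2.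
Proof.
case: k => [[[[cs sg] a] b] e] /=.
move=> [p1 [p2 [x1 [x2 [a1 [b1 [En1 Ed1 D1 [p1_gt0 x1_gt0] K1]]]]]]].
move=> [q1 [q2 [y1 [y2 [a2 [b2 [En2 Ed2 D2 _ K2]]]]]]] lt1 lt2.
have [? ? ? ?] : [/\ q1 = p1, q2 = p2, y1 = x1 & y2 = x2].
  by case: cs K1 K2 => -[-> -> ->] [Eq1 Eq2 Eq3]; subst; split => //; nia.
subst; apply: Nat2Z.inj; rewrite !(Nat2Z.inj_add, Nat2Z.inj_mul).
apply: (@unimodular_fiber (Z.of_nat (p1 * x1 + p2 * x2)) (Z.of_nat p1) (Z.of_nat p2)
          _ _ _ _ _ _ (if sg then 1 else -1)%Z); try (by case: (sg) D1 D2 => /=; lia); lia.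
Qed.

(* Invariant of the Euclidean algorithm on (n, d) at the stage with
   remainders (x, y): n and d are expressed in (x, y) by the rows (u, v)
   and (u', v') of a matrix of determinant +-1, with v <= u. *)
Definition euclid_inv (n d x y u v u' v' : nat) (sg : bool) : Prop :=
  [/\ n = u * x + v * y /\ d = u' * x + v' * y, det sg u v u' v',
      0 < u /\ v <= u, y <= x & coprime x y].

Lemma euclid_inv_step n d x y u v u' v' sg : 0 < y ->
  euclid_inv n d x y u v u' v' sg ->
  euclid_inv n d y (x %% y) (u * (x %/ y) + v) u (u' * (x %/ y) + v') u' (~~ sg).
Proof.
move=> y_gt0 [[En Ed] D [u_gt0 vu] yx co].
have q_gt0 : 0 < x %/ y by rewrite divn_gt0.
have r_lt : x %% y < y by rewrite ltn_mod.
have co' : coprime y (x %% y) by rewrite coprime_sym coprime_modl.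
move: (divn_eq x y) q_gt0 r_lt co'; move: (x %/ y) (x %% y) => q r Ex q_gt0 r_lt co'.
split => //; last exact: ltnW.
- by split; [rewrite En Ex | rewrite Ed Ex]; nia.
- by move: D; rewrite /det; case: sg => /=; nia.
- by split; nia.
Qed.

Definition step_key (U x y u v : nat) (sg : bool) : key :=
  if u <= U then (true, sg, u, v, y) else (false, ~~ sg, y, x %% y, u).

Lemma large_quotient_small_remainder n j U x y u v : 0 < j -> n <= U * U * j ->
  n = u * x + v * y -> j * y <= x -> U < u -> y <= U.
Proof.
move=> j_gt0 nU En jyx Uu; rewrite leqNgt; apply/negP => Uy.
have : U.+1 * (j * U.+1) <= u * x.
  by apply: leq_mul => //; apply: leq_trans jyx; rewrite leq_mul2l Uy orbT.
nia.
Qed.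

Lemma step_key_valid n d j U x y u v u' v' sg : 0 < j -> n <= U * U * j ->
  0 < y -> j <= x %/ y -> euclid_inv n d x y u v u' v' sg ->
  valid_key n d j U (step_key U x y u v sg).
Proof.
move=> j_gt0 nU y_gt0 jq [[En Ed] D [u_gt0 vu] yx co].
have jyx : j * y <= x by rewrite -leq_divRL.
have xn : x <= n by rewrite En; nia.
have co' : coprime y (x %% y) by rewrite coprime_sym coprime_modl.
have r_lt : x %% y < y by rewrite ltn_mod.
rewrite /step_key; move: (divn_eq x y) jq co' r_lt.
move: (x %/ y) (x %% y) => q r Ex jq co' r_lt.
case: ifP => uU; split => //.
- exact: leq_trans yx xn.
- rewrite /admissible u_gt0 vu (det_coprime D) y_gt0 /=.
  by apply/existsP; exists (inord x); rewrite inordK ?ltnS // -En eqxx jyx.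
- exists u, v, x, y, u', v'; split => //; split => //; exact: leq_trans yx.
- by apply: large_quotient_small_remainder En jyx _ => //; rewrite ltnNge uU.
- by rewrite En; nia.
- have c_le : u * q + v <= n by rewrite En Ex; nia.
  rewrite /admissible y_gt0 u_gt0 ltnW //= co' /=.
  by apply/existsP; exists (inord (u * q + v)); rewrite inordK ?ltnS // En Ex;
    apply/andP; split; [apply/eqP; nia | nia].
- exists (u * q + v), u, y, r, (u' * q + v'), u'; split => //.
  + by rewrite En Ex; nia.
  + by rewrite Ed Ex; nia.
  + by move: D; rewrite /det; case: sg => /=; nia.
  + split; nia.
Qed.

Fixpoint large_keys (j U fuel x y u v u' v' : nat) (sg : bool) : seq key :=
  if fuel is fuel'.+1 then
    if y == 0 then [::] else
    let rest := large_keys j U fuel' y (x %% y) (u * (x %/ y) + v) u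
                           (u' * (x %/ y) + v') u' (~~ sg) in
    if j <= x %/ y then step_key U x y u v sg :: rest else rest
  else [::].

Section LargeKeys.
Variables (j U : nat).

Lemma size_large_keys fuel x y u v u' v' sg :
  size (large_keys j U fuel x y u v u' v' sg) = count (fun q => j <= q) (quotients fuel x y).
Proof.
elim: fuel x y u v u' v' sg => [|fuel IH] x y u v u' v' sg //=.
by case: (y == 0) => //=; case: (j <= x %/ y) => /=; rewrite IH.
Qed.

(* Every key contains the remainder y of the stage that produced it; these
   remainders decrease strictly, so no key is produced twice. *)
Definition key_remainder (k : key) : nat := let: (cs, _, a, _, e) := k in if cs then e else a.

Lemma large_keys_remainder fuel x y u v u' v' sg k :
  k \in large_keys j U fuel x y u v u' v' sg -> key_remainder k <= y.
Proof.
elim: fuel x y u v u' v' sg k => [|fuel IH] x y u v u' v' sg k //=.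
case: eqP => // /eqP y0.
have ltr : x %% y < y by rewrite ltn_mod lt0n.
have in_rest k' : k' \in large_keys j U fuel y (x %% y) (u * (x %/ y) + v) u
                          (u' * (x %/ y) + v') u' (~~ sg) -> key_remainder k' <= y.
  by move/IH/leq_ltn_trans/(_ ltr)/ltnW.
case: (j <= x %/ y) => [|/in_rest //]; rewrite inE => /orP [/eqP ->|/in_rest //].
by rewrite /step_key; case: (u <= U).
Qed.

Lemma large_keys_uniq fuel x y u v u' v' sg : uniq (large_keys j U fuel x y u v u' v' sg).
Proof.
elim: fuel x y u v u' v' sg => [|fuel IH] x y u v u' v' sg //=.
case: eqP => // /eqP y0; case: (j <= x %/ y) => //=; rewrite IH andbT.
have ltr : x %% y < y by rewrite ltn_mod lt0n.
apply/negP => /large_keys_remainder/leq_ltn_trans/(_ ltr).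
by rewrite /step_key; case: (u <= U); rewrite ltnn.
Qed.

Lemma large_keys_valid n d fuel x y u v u' v' sg : 0 < j -> n <= U * U * j ->
  euclid_inv n d x y u v u' v' sg ->
  forall k, k \in large_keys j U fuel x y u v u' v' sg -> valid_key n d j U k.
Proof.
move=> j_gt0 nU.
elim: fuel x y u v u' v' sg => [|fuel IH] x y u v u' v' sg //= inv k.
case: eqP => // /eqP y0; have y_gt0 : 0 < y by rewrite lt0n.
have in_rest := IH _ _ _ _ _ _ _ (euclid_inv_step y_gt0 inv) k.
case: ifP => jq; last exact: in_rest.
by rewrite inE => /orP [/eqP ->|/in_rest //]; apply: step_key_valid j_gt0 nU y_gt0 jq inv.
Qed.

End LargeKeys.

(* The keys of the partial quotients >= j of n / d, starting from the
   identity matrix: n = 1 n + 0 d and d = 0 n + 1 d. *)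
Definition keys_of (j U n d : nat) : seq key := large_keys j U d.+1 n d 1 0 0 1 true.

Lemma size_keys_of j U n d : size (keys_of j U n d) = count (fun q => j <= q) (pquots n d).
Proof. exact: size_large_keys. Qed.

Lemma keys_of_valid j U n d : 0 < j -> n <= U * U * j -> d < n -> coprime n d ->
  forall k, k \in keys_of j U n d -> valid_key n d j U k.
Proof.
move=> j_gt0 nU dn co; apply: large_keys_valid => //.
by split; rewrite ?mul1n ?mul0n ?addn0 ?add0n //; apply: ltnW.
Qed.

Definition large_count (n j : nat) : nat :=
  \sum_(d < n | coprime n d) count (fun q => j <= q) (pquots n d).

Lemma sum_indicator (T : finType) (A P : pred T) :
  \sum_(i in A) (P i : nat) = #|[pred i in A | P i]|.
Proof. by rewrite -sum1_card big_mkcondr /=; apply: eq_bigr => i _; case: (P i). Qed.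

Lemma sum_pred_le1 (T : finType) (A P : pred T) :
  {in A &, forall x y, P x -> P y -> x = y} -> \sum_(i in A) (P i : nat) <= 1.
Proof.
move=> uniqP; rewrite sum_indicator.
by apply/card_le1_eqP => x y /andP [Ax Px] /andP [Ay Py]; apply: uniqP.
Qed.

Lemma sum_lt_min q m : \sum_(i < m) (i < q : nat) = minn q m.
Proof.
elim: m => [|m IH]; first by rewrite big_ord0 minn0.
by rewrite big_ord_recr /= IH; case: (ltnP m q) => ?; lia.
Qed.

Definition key_admissible (n j : nat) (k : key) : bool :=
  let: (_, _, a, b, e) := k in admissible n j a b e.

Lemma key_multiplicity j U n k : 0 < j -> n <= U * U * j ->
  \sum_(d < n | coprime n d) (k \in keys_of j U n d : nat) <= key_admissible n j k.
Proof.
move=> j_gt0 nU.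
have valid (d : 'I_n) : coprime n d -> k \in keys_of j U n d -> valid_key n d j U k.
  by move=> co; apply: keys_of_valid.
case adm : (key_admissible n j k).
  apply: sum_pred_le1 => d1 d2 co1 co2 /(valid _ co1) v1 /(valid _ co2) v2; apply: val_inj.
  case: k {adm valid} v1 v2 => [[[[cs sg] a] b] e] [_ _ _ L1] [_ _ _ L2].
  exact: key_fiber L1 L2 _ _.
rewrite leqn0 sum_nat_eq0; apply/forallP => d; apply/implyP => co; rewrite eqb0.
apply/negP => /(valid _ co); move: adm.
by case: k {valid} => [[[[cs sg] a] b] e] /= -> [].
Qed.

Definition fkey (U n : nat) := (bool * bool * 'I_U.+1 * 'I_U.+1 * 'I_n.+1)%type.

Definition key_of_fkey U n (k : fkey U n) : key :=
  (k.1.1.1.1, k.1.1.1.2, nat_of_ord k.1.1.2, nat_of_ord k.1.2, nat_of_ord k.2).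

Lemma size_le_fkeys n d j U (L : seq key) :
  {in L, forall k, valid_key n d j U k} -> uniq L ->
  size L <= \sum_(k : fkey U n) (key_of_fkey k \in L : nat).
Proof.
move=> valid uL; rewrite sum_indicator cardE -(size_map (@key_of_fkey U n)).
apply: uniq_leq_size => // k kL; apply/mapP.
case: k kL (valid k kL) => [[[[cs sg] a] b] e] kL [aU en /and4P [_ ba _ _] _].
have bU : b < U.+1 by rewrite ltnS (leq_trans ba).
have E : key_of_fkey ((cs, sg, inord a, inord b, inord e) : fkey U n) = (cs, sg, a, b, e).
  by rewrite /key_of_fkey /= !inordK.
by exists (cs, sg, inord a, inord b, inord e); rewrite // mem_enum inE E.
Qed.

Lemma admissible_eq_mod n j a b e1 e2 :
  admissible n j a b e1 -> admissible n j a b e2 -> e1 = e2 %[mod a].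
Proof.
wlog le21 : e1 e2 / e2 <= e1 => [hyp A1 A2|].
  by case: (leqP e2 e1) => [|/ltnW] le; [apply: hyp | apply/esym; apply: hyp].
move=> /and5P [a_gt0 _ co _ /existsP [c1 /andP [/eqP E1 _]]].
move=> /and5P [_ _ _ _ /existsP [c2 /andP [/eqP E2 _]]].
apply/eqP; rewrite eqn_mod_dvd // -(Gauss_dvdr _ co).
have -> : b * (e1 - e2) = a * (c2 - c1) by nia.
exact: dvdn_mulr.
Qed.

Lemma admissible_quotient_le n j a b e : 0 < j ->
  admissible n j a b e -> e %/ a <= n %/ (j * a) %/ a.
Proof.
move=> j_gt0 /and5P [a_gt0 _ _ _ /existsP [c /andP [/eqP E jec]]].
by apply: leq_div2r; rewrite leq_divRL ?muln_gt0 ?j_gt0 //; nia.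
Qed.

Lemma admissible_count n j a b : 0 < j ->
  \sum_(e < n.+1) (admissible n j a b e : nat) <= (n %/ (j * a) %/ a).+1.
Proof.
move=> j_gt0; rewrite sum_indicator -[X in _ <= X]card_ord.
apply: (@leq_card_in _ _ (fun e : 'I_n.+1 => inord (e %/ a) : 'I_(n %/ (j * a) %/ a).+1)).
move=> e1 e2; rewrite !inE => A1 A2 /(congr1 val) /=.
have [q1 q2] := (admissible_quotient_le j_gt0 A1, admissible_quotient_le j_gt0 A2).
rewrite !inordK ?ltnS // => Eq; apply: val_inj => /=.
by rewrite (divn_eq e1 a) (divn_eq e2 a) Eq (admissible_eq_mod A1 A2).
Qed.

Lemma admissible_count_pairs n j U a : 0 < j ->
  \sum_(b < U.+1) \sum_(e < n.+1) (admissible n j a b e : nat)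
    <= a.+1 * (n %/ (j * a) %/ a).+1.
Proof.
move=> j_gt0.
apply: (@leq_trans (\sum_(b < U.+1) (b < a.+1) * (n %/ (j * a) %/ a).+1)).
  apply: leq_sum => b _; case: ltnP => [_|ab]; first by rewrite mul1n admissible_count.
  rewrite mul0n leqn0 sum_nat_eq0; apply/forallP => e; apply/implyP => _.
  by rewrite eqb0; apply/negP => /and5P [_ ba _ _ _]; rewrite ltnNge ba in ab.
by rewrite -big_distrl /= sum_lt_min leq_mul2r geq_minl orbT.
Qed.

Lemma large_count_le n j U : 0 < j -> n <= U * U * j ->
  large_count n j <= 4 * \sum_(a < U.+1) a.+1 * (n %/ (j * a) %/ a).+1.
Proof.
move=> j_gt0 nU.
apply: (@leq_trans (\sum_(d < n | coprime n d)
                      \sum_(k : fkey U n) (key_of_fkey k \in keys_of j U n d : nat))).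
  apply: leq_sum => d co; rewrite -(size_keys_of j U).
  apply: size_le_fkeys; last exact: large_keys_uniq.
  by move=> k; apply: keys_of_valid.
rewrite exchange_big /=.
apply: (@leq_trans (\sum_(k : fkey U n) key_admissible n j (key_of_fkey k))).
  by apply: leq_sum => k _; apply: key_multiplicity.
have -> : \sum_(k : fkey U n) key_admissible n j (key_of_fkey k) =
    \sum_(cs : bool) \sum_(sg : bool) \sum_(a < U.+1) \sum_(b < U.+1) \sum_(e < n.+1)
      (admissible n j a b e : nat) by rewrite !pair_bigA.
rewrite !big_bool /=; set S := \sum_(a < U.+1) _; have -> : S + S + (S + S) = 4 * S by lia.
by rewrite leq_pmul2l //; apply: leq_sum => a _; apply: admissible_count_pairs.
Qed.

(* For an increasing sequence of integers > m + 1, the product of the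
   (1 - 1/p) is at least (m + 1) / (m + 1 + length): the k-th entry is at
   least m + 1 + k. *)
Lemma increasing_prod_le (s : seq nat) (m : nat) : path ltn m.+1 s ->
  m.+1 * \prod_(p <- s) p <= (m.+1 + size s) * \prod_(p <- s) p.-1.
Proof.
elim: s m => [|p s IH] m /=; first by rewrite !big_nil addn0.
case: p => [//|P] /andP [mP /IH IHs]; rewrite !big_cons /=.
apply: (@leq_trans (m.+1 * ((P.+1 + size s) * \prod_(q <- s) q.-1))).
  by rewrite leq_mul2l IHs orbT.
by rewrite !mulnA leq_mul2r; apply/orP; right; nia.
Qed.

Lemma prod_primes_logn n : 0 < n -> n = \prod_(p <- primes n) p ^ logn p n.
Proof. by move=> n_gt0; rewrite {1}(prod_prime_decomp n_gt0) prime_decompE big_map. Qed.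

Lemma totient_prod_primes n : 0 < n ->
  totient n * \prod_(p <- primes n) p = n * \prod_(p <- primes n) p.-1.
Proof.
move=> n_gt0.
rewrite totientE // -big_split [X in _ = X * _](prod_primes_logn n_gt0) [RHS]mulnC.
rewrite -big_split /= !big_seq; apply: eq_bigr => p pn.
by rewrite -mulnA -expnSr prednK // logn_gt0.
Qed.

Lemma size_primes_le_log n : 0 < n -> size (primes n) <= trunc_log 2 n.
Proof.
move=> n_gt0; apply: trunc_log_max => //.
have -> : 2 ^ size (primes n) = \prod_(p <- primes n) 2.
  by elim: (primes n) => [|p s IH]; rewrite ?big_nil ?big_cons ?expnS ?IH.
rewrite [X in _ <= X](prod_primes_logn n_gt0) big_seq [X in _ <= X]big_seq.
apply: leq_prod => p pn; have p_pr : prime p by move: pn; rewrite mem_primes => /andP [].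
apply: leq_trans (prime_gt1 p_pr) _.
by rewrite -{1}(expn1 p) leq_pexp2l ?logn_gt0 //; apply: prime_gt0.
Qed.

Lemma totient_lower n : 0 < n -> n <= totient n * (trunc_log 2 n).+1.
Proof.
move=> n_gt0.
have pos : 0 < \prod_(p <- primes n) p.-1.
  by rewrite big_seq prodn_cond_gt0 // => p; rewrite mem_primes => /and3P [/prime_gt1 ? _ _]; lia.
rewrite -(leq_pmul2r pos) mulnAC -totient_prod_primes //.
apply: leq_trans (_ : totient n * ((size (primes n)).+1 * \prod_(p <- primes n) p.-1) <= _).
  rewrite leq_mul2l; apply/orP; right.
  have := @increasing_prod_le (primes n) 0; rewrite mul1n add1n; apply.
  rewrite path_min_sorted ?sorted_primes //.
  by apply/allP => p; rewrite mem_primes => /and3P [/prime_gt1].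
by rewrite -mulnA leq_mul2l [X in _ <= X]mulnC leq_mul2r ltnS size_primes_le_log // !orbT.
Qed.

Lemma sumn_layers (l : seq nat) Q : all (fun q => q < Q) l ->
  sumn l = \sum_(j < Q) count (fun q => j < q) l.
Proof.
elim: l => [|q l IH] /=; first by rewrite big1.
case/andP => qQ /IH ->; rewrite big_split /= sum_lt_min; congr (_ + _); lia.
Qed.

Definition good (n Q : nat) : pred 'I_n :=
  [pred d : 'I_n | coprime n d && all (fun q => q < Q) (pquots n d)].
Arguments good : clear implicits.

Lemma good_sum_le n Q :
  \sum_(d in good n Q) s n d <= \sum_(j < Q) large_count n j.+1.
Proof.
rewrite /large_count exchange_big /=.
apply: (@leq_trans (\sum_(d in good n Q) \sum_(j < Q) count (fun q => j < q) (pquots n d))).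
  by apply: leq_sum => d /andP [_ small]; rewrite s_sumn (sumn_layers small).
rewrite [X in _ <= X](bigID (fun d : 'I_n => all (fun q => q < Q) (pquots n d))) /=.
by rewrite -big_andbC leq_addr.
Qed.

Lemma totient_le_good_large n Q : totient n <= #|good n Q| + large_count n Q.
Proof.
rewrite totient_count_coprime big_mkord.
apply: (@leq_trans (\sum_(d < n) ((d \in good n Q) +
                     if coprime n d then count (fun q => Q <= q) (pquots n d) else 0))).
  apply: leq_sum => d _; rewrite inE; case: (coprime n d) => //=.
  case: (boolP (all _ _)) => //= /allPn [q qd]; rewrite -leqNgt => Qq.
  have : 0 < count (fun q => Q <= q) (pquots n d) by rewrite -has_count; apply/hasP; exists q.
  lia.
rewrite big_split leq_add //; first by rewrite -(sum_indicator predT) eq_leq.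
by rewrite /large_count [X in _ <= X]big_mkcond.
Qed.

Lemma exists_below_average n Q : 0 < #|good n Q| ->
  exists2 d : 'I_n, good n Q d & s n d * #|good n Q| <= \sum_(d in good n Q) s n d.
Proof.
case/card_gt0P => d0 good_d0.
have [d good_d dmin] := @arg_minnP _ d0 (good n Q) (fun d => s n d) good_d0.
by exists d => //; rewrite -sum1_card big_distrr leq_sum // => i gi /=; rewrite muln1 dmin.
Qed.

Lemma good_in_range n Q (d : 'I_n) : 2 <= n -> good n Q d ->
  [&& 1 <= d, d <= n - 1 & coprime n d].
Proof.
move=> n_ge2 /andP [co _]; rewrite co andbT.
have d_gt0 : 0 < d.
  by rewrite lt0n; apply/eqP => d0; move: co; rewrite d0 /coprime gcdn0 => /eqP n1; lia.
by rewrite d_gt0 /=; have := ltn_ord d; lia.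
Qed.

Open Scope R_scope.

Lemma INR_leq (a b : nat) : (a <= b)%nat -> INR a <= INR b.
Proof. by move/leP; apply: le_INR. Qed.

Lemma INR_pos (a : nat) : (0 < a)%nat -> 0 < INR a.
Proof. by move/ltP; apply: lt_0_INR. Qed.

Lemma INR_ge3 n : (3 <= n)%nat -> 3 <= INR n.
Proof. by move/INR_leq; rewrite /=; lra. Qed.

Lemma INR_expn2 k : INR (expn 2 k) = 2 ^ k.
Proof. by elim: k => [|k IH] //; rewrite expnS mult_INR IH. Qed.

Lemma div_le_of_le_mul a b c : 0 < b -> a <= c * b -> a / b <= c.
Proof.
move=> b_pos ab; apply: (Rmult_le_reg_r b) => //.
by rewrite /Rdiv Rmult_assoc Rinv_l ?Rmult_1_r //; lra.
Qed.

Lemma le_div_of_mul_le a b c : 0 < b -> c * b <= a -> c <= a / b.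
Proof.
move=> b_pos ab; apply: (Rmult_le_reg_r b) => //.
by rewrite /Rdiv Rmult_assoc Rinv_l ?Rmult_1_r //; lra.
Qed.

Lemma INR_divn_le (m k : nat) : (0 < k)%nat -> INR (m %/ k) <= INR m / INR k.
Proof.
move=> k_gt0; apply: le_div_of_mul_le; first exact: INR_pos.
by rewrite -mult_INR; apply/INR_leq/leq_divM.
Qed.

Lemma ln_le x y : 0 < x -> x <= y -> ln x <= ln y.
Proof. by move=> x_pos [xy|<-]; [apply/Rlt_le/ln_increasing | right]. Qed.

Lemma ln_le_sub1 y : 0 < y -> ln y <= y - 1.
Proof. by move=> y_pos; have := exp_ineq1_le (ln y); rewrite exp_ln //; lra. Qed.

(* e < 3, from exp (-1/6) > 5/6 and (5/6)^6 > 1/3. *)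
Lemma exp1_lt_3 : exp 1 < 3.
Proof.
have lb : 5 / 6 < exp (- / 6) by have := exp_ineq1 (- / 6); lra.
have -> : exp 1 = / (exp (- / 6) * exp (- / 6) * exp (- / 6) *
                     exp (- / 6) * exp (- / 6) * exp (- / 6)).
  by rewrite -!exp_plus -exp_Ropp; congr exp; field.
set t := exp (- / 6) in lb *.
have t6 : 1 / 3 < t * t * t * t * t * t.
  have t2 : 25 / 36 < t * t by nra.
  have t4 : 625 / 1296 < t * t * t * t by nra.
  nra.
rewrite -[3]Rinv_inv; apply: Rinv_lt_contravar; lra.
Qed.

Lemma ln3_gt1 : 1 < ln 3.
Proof. by rewrite -[1](ln_exp 1); apply: ln_increasing; [apply: exp_pos | apply: exp1_lt_3]. Qed.

Lemma lnln3_pos : 0 < ln (ln 3).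
Proof. by rewrite -ln_1; apply: ln_increasing; [lra | apply: ln3_gt1]. Qed.

Lemma ln_ge1 x : 3 <= x -> 1 <= ln x.
Proof. by move=> x3; have := ln3_gt1; have := ln_le (ltac:(lra) : 0 < 3) x3; lra. Qed.

Lemma ln2_lt1 : ln 2 < 1.
Proof.
rewrite -[1](ln_exp 1); apply: ln_increasing; first lra.
by have := exp_ineq1 1; lra.
Qed.

Lemma log2_ln_bounds n : (3 <= n)%nat ->
  ln (INR n) <= INR (trunc_log 2 n).+1 <= 3 * ln (INR n).
Proof.
move=> n_ge3; have n3 := INR_ge3 n_ge3; have L1 := ln_ge1 n3.
have [lo hi] : INR (expn 2 (trunc_log 2 n)) <= INR n < INR (expn 2 (trunc_log 2 n).+1).
  split; first by apply: INR_leq; apply: trunc_logP => //; apply: leq_trans n_ge3.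
  by apply/lt_INR/ltP; apply: trunc_log_ltn.
rewrite !INR_expn2 in lo hi; have l2 := ln_lt_2; have l2' := ln2_lt1.
have up := ln_increasing _ _ (ltac:(lra) : 0 < INR n) hi.
have down := ln_le (pow_lt 2 _ Rlt_0_2) lo.
rewrite ln_pow in up; last lra; rewrite ln_pow in down; last lra.
rewrite S_INR in up *; have := pos_INR (trunc_log 2 n); split; nra.
Qed.

Fixpoint rsum (k : nat) (g : nat -> R) : R :=
  if k is k'.+1 then rsum k' g + g k' else 0.

Lemma INR_sum_le (Q : nat) (F : nat -> nat) (g : nat -> R) :
  (forall j, (j < Q)%nat -> INR (F j) <= g j) -> INR (\sum_(j < Q) F j) <= rsum Q g.
Proof.
elim: Q => [|Q IH] FG; first by rewrite big_ord0 /=; lra.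
rewrite big_ord_recr plus_INR /=; apply: Rplus_le_compat; last exact: FG.
by apply: IH => j jQ; apply/FG/ltnW.
Qed.

Lemma rsum_scal k c g : rsum k (fun j => c * g j) = c * rsum k g.
Proof. by elim: k => [|k IH] /=; [ring | rewrite IH; ring]. Qed.

Definition harm (k : nat) : R := rsum k (fun j => / INR j.+1).

Lemma harm_le k : (0 < k)%nat -> harm k <= 1 + ln (INR k).
Proof.
elim: k => [//|[|k] IH] _; first by rewrite /harm /= ln_1; lra.
have k1 := INR_pos (ltn0Sn k); have k2 := INR_pos (ltn0Sn k.+1).
have step : / INR k.+2 <= ln (INR k.+2) - ln (INR k.+1).
  have := ln_le_sub1 (Rdiv_lt_0_compat _ _ k1 k2).
  rewrite /Rdiv ln_mult ?ln_Rinv //; last exact: Rinv_0_lt_compat.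
  rewrite [INR k.+2]S_INR => h.
  have E : INR k.+1 * / (INR k.+1 + 1) - 1 = - / (INR k.+1 + 1) by field; lra.
  by rewrite E in h; lra.
have -> : harm k.+2 = harm k.+1 + / INR k.+2 by [].
by have := IH isT; lra.
Qed.

Lemma key_term_le n j a : (0 < j)%nat -> (0 < a)%nat ->
  INR (a.+1 * (n %/ (j * a) %/ a).+1) <= 2 * (INR n / INR j) / INR a + INR a.+1.
Proof.
move=> j_gt0 a_gt0; have a_pos := INR_pos a_gt0; have j_pos := INR_pos j_gt0.
have x_le : INR (n %/ (j * a) %/ a) <= INR n / INR j / INR a / INR a.
  apply: Rle_trans (INR_divn_le _ a_gt0) _; apply: Rmult_le_compat_r.
    by apply/Rlt_le/Rinv_0_lt_compat.
  apply: Rle_trans (INR_divn_le _ _) _; first by rewrite muln_gt0 j_gt0.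
  by rewrite mult_INR; right; field; lra.
have x_pos := pos_INR (n %/ (j * a) %/ a).
rewrite mult_INR !S_INR; set x := INR (n %/ (j * a) %/ a) in x_le x_pos *.
have -> : 2 * (INR n / INR j) / INR a = 2 * INR a * (INR n / INR j / INR a / INR a).
  by field; lra.
have : 1 <= INR a by have := INR_leq a_gt0; rewrite /=.
nra.
Qed.

Lemma key_sum_le n j U : (0 < j)%nat ->
  INR (\sum_(a < U.+1) a.+1 * (n %/ (j * a) %/ a).+1)
    <= 2 * (INR n / INR j) * harm U + INR (U.+1 * U.+2) / 2.
Proof.
move=> j_gt0; elim: U => [|U IH]; first by rewrite big_ord1 /= /harm /=; lra.
rewrite (_ : \sum_(a < U.+2) _ = \sum_(a < U.+1) a.+1 * (n %/ (j * a) %/ a).+1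
                                 + U.+2 * (n %/ (j * U.+1) %/ U.+1).+1)%nat;
  last by rewrite big_ord_recr.
rewrite plus_INR; have T := key_term_le n j_gt0 (ltn0Sn U).
have -> : harm U.+1 = harm U + / INR U.+1 by [].
have E2 : INR U.+2 = INR U.+1 + 1 := S_INR _.
have E3 : INR U.+3 = INR U.+1 + 2 by rewrite !S_INR; ring.
rewrite !mult_INR E2 E3 in IH T *.
by move: IH T; rewrite /Rdiv; lra.
Qed.

Lemma large_count_eq0 n j : (n < j)%nat -> large_count n j = 0%nat.
Proof.
move=> nj; rewrite /large_count big1 // => d _.
apply/eqP; rewrite -leqn0 leqNgt -has_count; apply/hasP => -[q /quotients_le].
by rewrite (maxn_idPl (ltnW (ltn_ord d))) => qn /(leq_trans nj); rewrite ltnNge qn.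
Qed.

(* N(j) <= 40 (n / j) ln n: apply [large_count_le] with U = sqrt(n / j) + 1. *)
Lemma large_count_real n j : (3 <= n)%nat -> (0 < j)%nat ->
  INR (large_count n j) <= 40 * (INR n / INR j) * ln (INR n).
Proof.
move=> n_ge3 j_gt0; have j_pos := INR_pos j_gt0.
have n3 := INR_ge3 n_ge3; have L1 := ln_ge1 n3.
have N_pos : 0 <= INR n / INR j by apply/Rlt_le/Rdiv_lt_0_compat => //; lra.
case: (ltnP n j) => [nj|jn]; first by rewrite large_count_eq0 //=; nra.
set m := (n %/ j)%nat; have m_gt0 : (0 < m)%nat by rewrite divn_gt0.
have [sq_le sq_gt] := Nat.sqrt_spec m (Nat.le_0_l m); set r := Nat.sqrt m in sq_le sq_gt.
have n_lt : (n < m.+1 * j)%nat by rewrite /m ltn_ceil.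
have nU : (n <= r.+1 * r.+1 * j)%nat by nia.
have Un : (0 < r.+1 <= n)%nat by rewrite /m in sq_le *; nia.
have UU : (r.+2 * r.+3 <= 12 * m)%nat by nia.
have := INR_leq (large_count_le j_gt0 nU); rewrite mult_INR => /Rle_trans; apply.
apply: Rle_trans (Rmult_le_compat_l _ _ _ _ (key_sum_le n r.+1 j_gt0)) _; first exact: pos_INR.
have H : harm r.+1 <= 1 + ln (INR n).
  apply: Rle_trans (harm_le (ltn0Sn r)) _; apply/Rplus_le_compat_l/ln_le.
    exact/INR_pos.
  by case/andP: Un => _ /INR_leq.
have UU' : INR (r.+2 * r.+3) <= 12 * (INR n / INR j).
  apply: Rle_trans (INR_leq UU) _; rewrite mult_INR (_ : INR 12 = 12); last by rewrite /=; ring.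
  by apply: Rmult_le_compat_l; [lra | apply: INR_divn_le].
rewrite (_ : INR 4 = 4); last by rewrite /=; ring.
have := Rmult_le_compat_l _ _ _ N_pos H; have := Rmult_le_compat_l _ _ _ N_pos L1.
lra.
Qed.

Definition threshold (n : nat) : nat := (80 * (trunc_log 2 n).+1 * (trunc_log 2 n).+1)%nat.

Lemma INR_threshold n :
  INR (threshold n) = 80 * INR (trunc_log 2 n).+1 * INR (trunc_log 2 n).+1.
Proof. by rewrite /threshold !mult_INR (_ : INR 80 = 80) //=; ring. Qed.

(* At most half of the residues coprime to n have a quotient >= Q:
   N(Q) <= 40 n ln n / (80 m^2) <= phi(n) / 2 as n <= phi(n) m and ln n <= m. *)
Lemma few_large_quotients n : (3 <= n)%nat ->
  INR (large_count n (threshold n)) <= INR (totient n) / 2.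
Proof.
move=> n_ge3; have n3 := INR_ge3 n_ge3; have L1 := ln_ge1 n3.
have [Lm mL] := log2_ln_bounds n_ge3; set m := INR (trunc_log 2 n).+1 in Lm mL.
have phi_m : INR n <= INR (totient n) * m.
  by rewrite -mult_INR; apply/INR_leq/totient_lower/(leq_trans _ n_ge3).
apply: Rle_trans (large_count_real n_ge3 _) _; first by rewrite /threshold; lia.
rewrite INR_threshold -/m.
have -> : 40 * (INR n / (80 * m * m)) * ln (INR n) = INR n / (2 * m) * (ln (INR n) / m).
  by field; lra.
have q1 : ln (INR n) / m <= 1 by apply: div_le_of_le_mul; lra.
have q0 : 0 <= INR n / (2 * m) by apply/Rlt_le/Rdiv_lt_0_compat; lra.
have q2 : INR n / (2 * m) <= INR (totient n) / 2 by apply: div_le_of_le_mul; lra.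
nra.
Qed.

Lemma good_sum_real n : (3 <= n)%nat ->
  INR (\sum_(d in good n (threshold n)) s n d)
    <= 40 * INR n * ln (INR n) * (1 + ln (INR (threshold n))).
Proof.
move=> n_ge3; have n3 := INR_ge3 n_ge3; have L1 := ln_ge1 n3.
have Q_gt0 : (0 < threshold n)%nat by rewrite /threshold; lia.
apply: Rle_trans (INR_leq (good_sum_le n (threshold n))) _.
apply: Rle_trans (@INR_sum_le _ (fun j => large_count n j.+1)
                    (fun j => 40 * INR n * ln (INR n) * / INR j.+1) _) _.
  move=> j _; apply: Rle_trans (large_count_real n_ge3 (ltn0Sn j)) _.
  by right; rewrite /Rdiv; ring.
by rewrite rsum_scal -/(harm _); apply: Rmult_le_compat_l; [nra | exact: harm_le].
Qed.

Lemma ln_threshold_le n : (3 <= n)%nat ->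
  1 + ln (INR (threshold n)) <= (84 / ln (ln 3) + 2) * ln (ln (INR n)).
Proof.
move=> n_ge3; have n3 := INR_ge3 n_ge3; have L1 := ln_ge1 n3.
have [Lm mL] := log2_ln_bounds n_ge3; set m := INR (trunc_log 2 n).+1 in Lm mL.
have l3_gt1 := ln3_gt1; have l3 := lnln3_pos.
have lL : ln (ln 3) <= ln (ln (INR n)) by apply: ln_le; [lra | apply: ln_le; lra].
have ln80 : ln 80 <= 79 by have := @ln_le_sub1 80; lra.
have lnm : ln m <= 2 + ln (ln (INR n)).
  apply: Rle_trans (ln_le (ltac:(lra) : 0 < m) mL) _; rewrite ln_mult; try lra.
  by have := @ln_le_sub1 3; lra.
rewrite INR_threshold -/m (ln_mult (80 * m) m) ?(ln_mult 80 m); try lra.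
have : 1 <= ln (ln (INR n)) / ln (ln 3) by apply: le_div_of_mul_le; lra.
have -> : (84 / ln (ln 3) + 2) * ln (ln (INR n))
          = 84 * (ln (ln (INR n)) / ln (ln 3)) + 2 * ln (ln (INR n)) by field; lra.
lra.
Qed.

Theorem theorem1p2 :
  exists c : R, forall n : nat, leq 3 n ->
    exists d : nat, [&& leq 1 d, leq d (subn n 1) & coprime n d] /\
      INR (s n d) <= c * (INR n / INR (totient n)) * ln (INR n) * ln (ln (INR n)).
Proof.
exists (80 * (84 / ln (ln 3) + 2)) => n n_ge3.
set Q := threshold n; set phi := INR (totient n).
have phi_pos : 0 < phi by apply/INR_pos; rewrite totient_gt0; apply: leq_trans n_ge3.
have many_good : phi / 2 <= INR #|good n Q|.
  have := INR_leq (totient_le_good_large n Q); rewrite plus_INR.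
  by have := few_large_quotients n_ge3; rewrite -/Q -/phi; lra.
have [d good_d avg] : exists2 d : 'I_n, good n Q d &
    (s n d * #|good n Q| <= \sum_(d in good n Q) s n d)%nat.
  by apply: exists_below_average; apply/ltP/INR_lt; rewrite /=; lra.
exists d; split; first exact: good_in_range (leq_trans _ n_ge3) good_d.
have s_avg : INR (s n d) * (phi / 2) <= 40 * INR n * ln (INR n) * (1 + ln (INR Q)).
  apply: Rle_trans (Rmult_le_compat_l _ _ _ (pos_INR _) many_good) _.
  by rewrite -mult_INR; apply: Rle_trans (INR_leq avg) (good_sum_real n_ge3).
apply: (Rmult_le_reg_r (phi / 2)); first lra.
apply: Rle_trans s_avg _.
have -> : 80 * (84 / ln (ln 3) + 2) * (INR n / phi) * ln (INR n) * ln (ln (INR n)) * (phi / 2)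
          = 40 * INR n * ln (INR n) * ((84 / ln (ln 3) + 2) * ln (ln (INR n))).
  by field; have := lnln3_pos; lra.
apply: Rmult_le_compat_l; last exact: ln_threshold_le.
by have n3 := INR_ge3 n_ge3; have := ln_ge1 n3; nra.
Qed.
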